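(* Let $\mathcal{S}$ be finite, $\Pi$ irreducible stochastic on $\mathcal{S}$, $\kappa(x,y):=\pi_{xy}-\mathbf{1}_{x=y}$, $\mathcal{K}=\Pi-\mathrm{I}$, $Q=(q(y))$ the invariant distribution, and assume detailed balance $q(y)\kappa(y,z)=q(z)\kappa(z,y)$ for all $y,z$. Let $\Phi:(0,\infty)\to\mathbb{R}$ be convex, continuously differentiable with continuous strictly positive second derivative, $\Phi(1)=0$, $\varphi:=\Phi'$. Let $\boldsymbol{\ell}_t=\ell(t,\cdot)$, $\ell(t,y):=p(t,y)/q(y)$, where $p(t,\cdot)$ is the time-$t$ law of the chain with generator $\mathcal{K}$ started from a positive initial distribution. Fix $t_0>0$, put $\boldsymbol{\ell}:=\boldsymbol{\ell}_{t_0}$, and let $(\psi_t)_{t_0\le t<t_0+\varepsilon}$ be continuous and $(\ell^\psi_t)$ positive with $\ell^\psi_{t_0}=\boldsymbol{\ell}_{t_0}$ and $\partial_t\ell^\psi_t+\nabla\cdot(\vartheta_{\boldsymbol{\ell}_t}\nabla\psi_t)=0$. Then $$\lim_{h\downarrow0}\frac1h\big\|\boldsymbol{\ell}_{t_0+h}-\boldsymbol{\ell}_{t_0}\big\|_{\mathbb{H}^{-1}_\Theta(\mathcal{S},\boldsymbol{\ell}Q)}=\big\|\mathcal{K}\boldsymbol{\ell}_{t_0}\big\|_{\mathbb{H}^{-1}_\Theta(\mathcal{S},\boldsymbol{\ell}Q)}=\big\|\varphi(\boldsymbol{\ell}_{t_0})\big\|_{\mathbb{H}^1_\Theta(\mathcal{S},\boldsymbol{\ell}Q)},$$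 and $$\lim_{h\downarrow0}\frac1h\big\|\ell^\psi_{t_0+h}-\ell^\psi_{t_0}\big\|_{\mathbb{H}^{-1}_\Theta(\mathcal{S},\boldsymbol{\ell}Q)}=\big\|\nabla\cdot(\vartheta_{\boldsymbol{\ell}_{t_0}}\nabla\psi_{t_0})\big\|_{\mathbb{H}^{-1}_\Theta(\mathcal{S},\boldsymbol{\ell}Q)}=\big\|\psi_{t_0}\big\|_{\mathbb{H}^1_\Theta(\mathcal{S},\boldsymbol{\ell}Q)} .$$
   Context: $\mathcal{Z}:=\{(x,y):\kappa(x,y)>0\}$, $c(x,y):=\frac12\kappa(x,y)q(x)$, $\nabla f(x,y):=f(y)-f(x)$, $(\nabla\cdot F)(x):=\frac12\sum_{y\neq x}\kappa(x,y)[F(x,y)-F(y,x)]$. $\Theta^\Phi(a,b):=\frac{a-b}{\varphi(a)-\varphi(b)}$ for $a\ne b$, $\Theta^\Phi(b,b):=1/\Phi''(b)$; for positive $\ell$, $\vartheta_\ell(x,y):=\Theta^\Phi(\ell(x),\ell(y))$. $\|f\|^2_{\mathbb{H}^1_\Theta(\mathcal{S},\ell Q)}:=\sum_{(x,y)\in\mathcal{Z}}c(x,y)\vartheta_\ell(x,y)(\nabla f(x,y))^2$, and $\|f\|_{\mathbb{H}^{-1}_\Theta(\mathcal{S},\ell Q)}:=\sup_{g:\mathcal{S}\to\mathbb{R}}\frac{\sum_xq(x)f(x)g(x)}{\|g\|_{\mathbb{H}^1_\Theta(\mathcal{S},\ell Q)}}$. *)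

From HB Require Import structures.
From mathcomp Require Import all_boot all_order all_algebra.
From mathcomp Require Import all_classical all_reals all_analysis.
Set Implicit Arguments. Unset Strict Implicit. Unset Printing Implicit Defensive.
Import Order.TTheory GRing.Theory Num.Theory.
Import numFieldNormedType.Exports.
Local Open Scope classical_set_scope.
Local Open Scope ring_scope.

Section Defs.
Variables (R : realType) (S : finType).

Definition kappa (Pi : S -> S -> R) (x y : S) : R := Pi x y - (x == y)%:R.

Definition Kop (Pi : S -> S -> R) (f : S -> R) (x : S) : R :=
  \sum_(y : S) kappa Pi x y * f y.

Definition phiP (Phi : R -> R) : R -> R := derive1 Phi.
Definition Phi2 (Phi : R -> R) : R -> R := derive1 (derive1 Phi).

Definition ThetaP (Phi : R -> R) (a b : R) : R :=
  if a == b then (Phi2 Phi b)^-1 else (a - b) / (phiP Phi a - phiP Phi b).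

Definition vartheta (Phi : R -> R) (l : S -> R) (x y : S) : R :=
  ThetaP Phi (l x) (l y).

Definition grad (f : S -> R) (x y : S) : R := f y - f x.

Definition divg (Pi : S -> S -> R) (F : S -> S -> R) (x : S) : R :=
  2^-1 * \sum_(y : S | y != x) kappa Pi x y * (F x y - F y x).

Definition cw (Pi : S -> S -> R) (q : S -> R) (x y : S) : R :=
  2^-1 * kappa Pi x y * q x.

Definition H1sq (Pi : S -> S -> R) (q : S -> R) (Phi : R -> R) (l f : S -> R) : R :=
  \sum_(x : S) \sum_(y : S | 0 < kappa Pi x y)
     cw Pi q x y * vartheta Phi l x y * (grad f x y) ^+ 2.

Definition H1norm Pi q Phi l f : R := Num.sqrt (H1sq Pi q Phi l f).

Definition Hm1norm (Pi : S -> S -> R) (q : S -> R) (Phi : R -> R) (l f : S -> R)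
  : \bar R :=
  ereal_sup (range (fun g : S -> R =>
     ((\sum_(x : S) q x * f x * g x) / H1norm Pi q Phi l g)%:E)).

End Defs.

(* The pairing [qdot q f g = sum_x q x f x g x] and the weighted Dirichlet
   form [dirichlet th u g = sum_Z c th grad u grad g] are linked by a discrete
   integration by parts (detailed balance and symmetry of [th]).  Both
   [K l = div (vartheta_l grad phi(l))], because
   [Theta(a, b) (phi b - phi a) = b - a], and [div (vartheta_l grad psi)] are
   therefore represented as [g |-> dirichlet u g] up to sign, with [u = phi(l)]
   resp. [psi]; by Cauchy-Schwarz for the form, a function represented by [u]
   has H^-1 norm exactly the H^1 norm of [u].
   For the limits, the difference quotient of a mass-preserving curve is
   [f + E_h] with [sum_x q x E_h x = 0] and [E_h -> 0].  Irreducibility and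
   [vartheta > 0] give a discrete Poincare inequality
   [|g y - g x| <= M |g|_H^1], so such a mean-zero perturbation moves the
   H^-1 norm by at most [M sum_x q x |E_h x|].  Positivity of [vartheta] comes
   from the strict monotonicity of [phi] and the positivity of [q] and of the
   law [p t0], the latter by a continuation argument on [expR t * p t y],
   which is nondecreasing while the law stays nonnegative. *)

From HB Require Import structures.
From mathcomp Require Import all_boot all_order all_algebra.
From mathcomp Require Import all_classical all_reals all_analysis.
From mathcomp Require Import ring lra.
Import Order.TTheory GRing.Theory Num.Theory.
Import numFieldNormedType.Exports.
Set Implicit Arguments. Unset Strict Implicit. Unset Printing Implicit Defensive.
Local Open Scope classical_set_scope.
Local Open Scope ring_scope.

Lemma ler_sum_pair_term (R : realDomainType) (I J : finType) (P : I -> pred J)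
    (F : I -> J -> R) i j :
  P i j -> (forall i j, P i j -> 0 <= F i j) ->
  F i j <= \sum_(i' : I) \sum_(j' | P i' j') F i' j'.
Proof.
move=> Pij F_ge0; rewrite (bigD1 i) //= (bigD1 j) //= -addrA lerDl.
rewrite addr_ge0 ?sumr_ge0 // => [j' /andP[/F_ge0] //|i' _].
by rewrite sumr_ge0 // => j' /F_ge0.
Qed.

Lemma cvg_sum (R : realType) (I : finType) (T : Type) (G : set_system T)
    {FG : Filter G} (f : I -> T -> R) (a : I -> R) :
  (forall i, f i @ G --> a i) -> \sum_(i : I) f i t @[t --> G] --> \sum_(i : I) a i.
Proof. by move=> fa; apply: cvg_big => [|i _]; [exact: add_continuous | exact: fa]. Qed.

Lemma ThetaPC (R : realType) (Phi : R -> R) a b : ThetaP Phi a b = ThetaP Phi b a.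
Proof.
rewrite /ThetaP eq_sym; have [->//|_] := eqVneq b a.
by rewrite -[in RHS](opprB a b) -[in RHS](opprB (phiP Phi a)) invrN mulrNN.
Qed.

Section ConvexPotential.
Variables (R : realType) (Phi : R -> R).
Hypothesis phiP_derivable : forall x, 0 < x -> derivable (phiP Phi) x 1.
Hypothesis Phi2_gt0 : forall x, 0 < x -> 0 < Phi2 Phi x.

Lemma phiP_lt a b : 0 < a -> a < b -> phiP Phi a < phiP Phi b.
Proof.
move=> a_gt0 ab.
have phi_d x : x \in `]a, b[ -> is_derive x 1 (phiP Phi) (Phi2 Phi x).
  rewrite in_itv /= => /andP[ax _]; rewrite /Phi2 derive1E.
  exact/derivableP/phiP_derivable/(lt_trans a_gt0 ax).
have phi_c : {within `[a, b], continuous (phiP Phi)}.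
  apply: derivable_within_continuous => x; rewrite in_itv /= => /andP[ax _].
  exact/phiP_derivable/(lt_le_trans a_gt0 ax).
have [c] := MVT ab phi_d phi_c; rewrite in_itv /= => /andP[ac _] /eqP.
rewrite subr_eq => /eqP ->.
by rewrite ltrDr mulr_gt0 ?subr_gt0 // Phi2_gt0 // (lt_trans a_gt0 ac).
Qed.

Lemma ThetaP_gt0 a b : 0 < a -> 0 < b -> 0 < ThetaP Phi a b.
Proof.
move=> a_gt0 b_gt0; rewrite /ThetaP.
have [_|ab_neq] := eqVneq a b; first by rewrite invr_gt0 Phi2_gt0.
have [ab|ba|ab_eq] := ltgtP a b; last by rewrite ab_eq eqxx in ab_neq.
  by rewrite -[a - b]opprB -[phiP Phi a - _]opprB invrN mulrNN divr_gt0 ?subr_gt0 ?phiP_lt.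
by rewrite divr_gt0 ?subr_gt0 ?phiP_lt.
Qed.

Lemma ThetaP_mul_sub a b : 0 < a -> 0 < b ->
  ThetaP Phi a b * (phiP Phi b - phiP Phi a) = b - a.
Proof.
move=> a_gt0 b_gt0; rewrite /ThetaP.
have [->|ab] := eqVneq a b; first by rewrite !subrr mulr0.
have phi_neq : phiP Phi a - phiP Phi b != 0.
  rewrite subr_eq0; have [lt_ab|lt_ba|eq_ab] := ltgtP a b.
  - by rewrite lt_eqF // phiP_lt.
  - by rewrite gt_eqF // phiP_lt.
  - by rewrite eq_ab eqxx in ab.
by field.
Qed.

End ConvexPotential.

Section Generator.
Variables (R : realType) (S : finType) (Pi : S -> S -> R).
Hypothesis Pi_sum1 : forall x, \sum_(y : S) Pi x y = 1.

Lemma kappa_sum x : \sum_(y : S) kappa Pi x y = 0.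
Proof.
rewrite /kappa sumrB Pi_sum1 (bigD1 x) //= eqxx big1 ?addr0 ?subrr // => y.
by rewrite eq_sym => /negbTE ->.
Qed.

Lemma Kop_grad f x : Kop Pi f x = \sum_(y : S) kappa Pi x y * grad f x y.
Proof.
under [RHS]eq_bigr do rewrite mulrBr.
by rewrite sumrB -mulr_suml kappa_sum mul0r subr0.
Qed.

Lemma Kop_mass0 (q : S -> R) f :
  (forall x y, q x * kappa Pi x y = q y * kappa Pi y x) ->
  \sum_(x : S) q x * Kop Pi f x = 0.
Proof.
move=> q_kappa_sym.
transitivity (\sum_(x : S) \sum_(y : S) q x * kappa Pi x y * f y).
  by apply: eq_bigr => x _; rewrite /Kop mulr_sumr; apply: eq_bigr => y _; rewrite mulrA.
rewrite exchange_big /= big1 // => y _; under eq_bigr do rewrite q_kappa_sym.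
by rewrite -mulr_suml -mulr_sumr kappa_sum mulr0 mul0r.
Qed.

End Generator.

Lemma divg_flux (R : realType) (S : finType) (Pi : S -> S -> R) th psi x :
  (forall a b, th a b = th b a) ->
  divg Pi (fun a b => th a b * grad psi a b) x
  = \sum_(y : S) kappa Pi x y * (th x y * grad psi x y).
Proof.
move=> th_sym; rewrite /divg [RHS](bigD1 x) //= [grad psi x x]/grad subrr !mulr0 add0r.
by rewrite mulr_sumr; apply: eq_bigr => y _; rewrite th_sym /grad; field.
Qed.

Section DirichletForm.
Variables (R : realType) (S : finType) (Pi : S -> S -> R) (q : S -> R).

Definition qdot (f g : S -> R) : R := \sum_(x : S) q x * f x * g x.

Definition dirichlet (th : S -> S -> R) (u g : S -> R) : R :=
  \sum_(x : S) \sum_(y : S | 0 < kappa Pi x y)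
     cw Pi q x y * th x y * (grad u x y * grad g x y).

Lemma qdotDl f1 f2 g : qdot (fun x => f1 x + f2 x) g = qdot f1 g + qdot f2 g.
Proof. by rewrite -big_split; apply: eq_bigr => x _ /=; ring. Qed.

Lemma qdot_mean0_le (E g : S -> R) C : (forall x, 0 <= q x) ->
  (forall x y, `|g y - g x| <= C) -> \sum_(x : S) q x * E x = 0 ->
  `|qdot E g| <= C * \sum_(x : S) q x * `|E x|.
Proof.
move=> q_ge0 osc E0.
have [x0 _|S0] := pickP (@predT S); last by rewrite /qdot !big_pred0 ?normr0 ?mulr0.
have -> : qdot E g = \sum_(x : S) q x * E x * (g x - g x0).
  under [RHS]eq_bigr do rewrite mulrBr.
  by rewrite sumrB -mulr_suml E0 mul0r subr0.
rewrite mulr_sumr (le_trans (ler_norm_sum _ _ _)) // ler_sum // => x _.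
by rewrite !normrM ger0_norm // mulrC ler_wpM2r ?mulr_ge0.
Qed.

Lemma H1sqE Phi l g : H1sq Pi q Phi l g = dirichlet (vartheta Phi l) g g.
Proof. by apply: eq_bigr => x _; apply: eq_bigr => y _; rewrite expr2. Qed.

Lemma dirichlet_cstr th u c : dirichlet th u (fun=> c) = 0.
Proof.
by rewrite /dirichlet big1 // => x _; rewrite big1 // => y _; rewrite /grad subrr !mulr0.
Qed.

Lemma dirichletNl th u g : dirichlet th (fun z => - u z) g = - dirichlet th u g.
Proof.
rewrite -sumrN; apply: eq_bigr => x _; rewrite -sumrN; apply: eq_bigr => y _.
by rewrite /grad; ring.
Qed.

Lemma dirichlet_sqrD th u g s :
  dirichlet th (fun z => u z + s * g z) (fun z => u z + s * g z)
  = dirichlet th u u + 2 * s * dirichlet th u g + s ^+ 2 * dirichlet th g g.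
Proof.
rewrite /dirichlet !mulr_sumr -!big_split; apply: eq_bigr => x _ /=.
rewrite !mulr_sumr -!big_split; apply: eq_bigr => y _ /=; rewrite /grad; ring.
Qed.

Section Nonnegative.
Variable th : S -> S -> R.
Hypothesis q_ge0 : forall x, 0 <= q x.
Hypothesis th_ge0 : forall x y, 0 < kappa Pi x y -> 0 <= th x y.

Lemma cw_ge0 x y : 0 < kappa Pi x y -> 0 <= cw Pi q x y.
Proof. by move=> /ltW k_ge0; rewrite /cw !mulr_ge0 ?invr_ge0. Qed.

Lemma dirichlet_ge0 u : 0 <= dirichlet th u u.
Proof.
apply: sumr_ge0 => x _; apply: sumr_ge0 => y k_gt0.
by rewrite -expr2 mulr_ge0 ?sqr_ge0 // mulr_ge0 ?cw_ge0 ?th_ge0.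
Qed.

Lemma dirichlet_CauchySchwarz u g : 0 < dirichlet th g g ->
  dirichlet th u g ^+ 2 <= dirichlet th u u * dirichlet th g g.
Proof.
move=> g_gt0; set s := - dirichlet th u g / dirichlet th g g.
have := dirichlet_ge0 (fun z => u z + s * g z); rewrite dirichlet_sqrD.
have -> : dirichlet th u u + 2 * s * dirichlet th u g + s ^+ 2 * dirichlet th g g
    = (dirichlet th u u * dirichlet th g g - dirichlet th u g ^+ 2) / dirichlet th g g.
  by rewrite /s; field; exact: lt0r_neq0.
by rewrite pmulr_lge0 ?invr_gt0 // subr_ge0.
Qed.

Lemma dirichlet_ratio_le u g :
  dirichlet th u g / Num.sqrt (dirichlet th g g) <= Num.sqrt (dirichlet th u u).
Proof.
have [g0|g_neq0] := eqVneq (dirichlet th g g) 0.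
  by rewrite g0 sqrtr0 invr0 mulr0 sqrtr_ge0.
have g_gt0 : 0 < dirichlet th g g by rewrite lt_def g_neq0 dirichlet_ge0.
rewrite ler_pdivrMr ?sqrtr_gt0 // -sqrtrM ?dirichlet_ge0 //.
rewrite (le_trans (ler_norm _)) // -sqrtr_sqr ler_wsqrtr //.
exact: dirichlet_CauchySchwarz.
Qed.

Lemma dirichlet_ratio_self u :
  dirichlet th u u / Num.sqrt (dirichlet th u u) = Num.sqrt (dirichlet th u u).
Proof.
have [->|u_neq0] := eqVneq (Num.sqrt (dirichlet th u u)) 0; first by rewrite invr0 mulr0.
by rewrite -{1}(sqr_sqrtr (dirichlet_ge0 u)) expr2 mulfK.
Qed.

End Nonnegative.

Section IntegrationByParts.
Hypothesis Pi_ge0 : forall x y, 0 <= Pi x y.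
Hypothesis q_kappa_sym : forall x y, q x * kappa Pi x y = q y * kappa Pi y x.

Lemma kappa_offdiag x y : x != y -> kappa Pi x y = Pi x y.
Proof. by rewrite /kappa => /negbTE ->; rewrite subr0. Qed.

Lemma dirichlet_all_pairs th u g : dirichlet th u g =
  \sum_(x : S) \sum_(y : S) cw Pi q x y * th x y * (grad u x y * grad g x y).
Proof.
apply: eq_bigr => x _; rewrite [RHS](bigID (fun y => 0 < kappa Pi x y)) /=.
rewrite [X in _ = _ + X]big1 ?addr0 // => y.
have [<-|xy] := eqVneq x y; first by rewrite /grad subrr !mul0r mulr0.
rewrite kappa_offdiag // lt_def Pi_ge0 andbT negbK => /eqP Pi0.
by rewrite /cw kappa_offdiag // Pi0 mulr0 !mul0r.
Qed.

Lemma sum_antisym_swap (A : S -> S -> R) (g : S -> R) :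
  (forall x y, A y x = - A x y) ->
  \sum_(x : S) \sum_(y : S) A x y * g y = - \sum_(x : S) \sum_(y : S) A x y * g x.
Proof.
move=> A_anti; rewrite exchange_big /= -sumrN; apply: eq_bigr => x _.
by rewrite -sumrN; apply: eq_bigr => y _; rewrite A_anti mulNr.
Qed.

Lemma qdot_flux th u g : (forall x y, th x y = th y x) ->
  qdot (fun x => \sum_(y : S) kappa Pi x y * (th x y * grad u x y)) g
  = - dirichlet th u g.
Proof.
move=> th_sym; pose A x y := q x * kappa Pi x y * (th x y * grad u x y).
have A_anti x y : A y x = - A x y by rewrite /A q_kappa_sym th_sym /grad; ring.
have -> : qdot (fun x => \sum_(y : S) kappa Pi x y * (th x y * grad u x y)) g
    = \sum_(x : S) \sum_(y : S) A x y * g x.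
  by apply: eq_bigr => x _; rewrite mulr_sumr mulr_suml; apply: eq_bigr => y _; rewrite /A; ring.
have -> : dirichlet th u g = 2^-1 * \sum_(x : S) \sum_(y : S) A x y * (g y - g x).
  rewrite dirichlet_all_pairs mulr_sumr; apply: eq_bigr => x _; rewrite mulr_sumr.
  by apply: eq_bigr => y _; rewrite /A /cw /grad; ring.
have -> : \sum_(x : S) \sum_(y : S) A x y * (g y - g x)
    = \sum_(x : S) \sum_(y : S) A x y * g y - \sum_(x : S) \sum_(y : S) A x y * g x.
  by rewrite -sumrB; apply: eq_bigr => x _; rewrite -sumrB; apply: eq_bigr => y _; ring.
by rewrite sum_antisym_swap //; field.
Qed.

Lemma qdot_divg th psi g : (forall x y, th x y = th y x) ->
  qdot (divg Pi (fun a b => th a b * grad psi a b)) g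
  = dirichlet th (fun z => - psi z) g.
Proof.
move=> th_sym; rewrite dirichletNl -(qdot_flux psi g th_sym).
by apply: eq_bigr => x _; rewrite divg_flux.
Qed.

Lemma qdot_Ndivg th psi g : (forall x y, th x y = th y x) ->
  qdot (fun x => - divg Pi (fun a b => th a b * grad psi a b) x) g = dirichlet th psi g.
Proof.
move=> th_sym; rewrite -[RHS]opprK -dirichletNl -qdot_divg // -sumrN.
by apply: eq_bigr => x _; rewrite mulrN mulNr.
Qed.

Lemma Ndivg_mass0 th psi : (forall x y, th x y = th y x) ->
  \sum_(x : S) q x * - divg Pi (fun a b => th a b * grad psi a b) x = 0.
Proof.
move=> th_sym; rewrite -[RHS](dirichlet_cstr th psi 1) -qdot_Ndivg //.
by apply: eq_bigr => x _; rewrite mulr1.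
Qed.

Lemma qdot_Kop Phi l g :
  (forall x, \sum_(y : S) Pi x y = 1) ->
  (forall x, 0 < x -> derivable (phiP Phi) x 1) -> (forall x, 0 < x -> 0 < Phi2 Phi x) ->
  (forall x, 0 < l x) ->
  qdot (Kop Pi l) g = dirichlet (vartheta Phi l) (fun z => - phiP Phi (l z)) g.
Proof.
move=> Pi_sum1 phiP_d Phi2_gt0 l_gt0.
rewrite dirichletNl -qdot_flux => [|a b]; last exact: ThetaPC.
apply: eq_bigr => x _; rewrite Kop_grad //; congr (_ * _ * _).
by apply: eq_bigr => y _; rewrite /vartheta /grad ThetaP_mul_sub.
Qed.

End IntegrationByParts.

Section Poincare.
Variable th : S -> S -> R.
Hypothesis irreducible : forall x y, connect (fun a b => 0 < Pi a b) x y.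
Hypothesis q_gt0 : forall x, 0 < q x.
Hypothesis th_gt0 : forall x y, 0 < kappa Pi x y -> 0 < th x y.

Let cwth_gt0 x y : 0 < kappa Pi x y -> 0 < cw Pi q x y * th x y.
Proof. by move=> k_gt0; rewrite !mulr_gt0 ?invr_gt0 ?ltr0n ?th_gt0. Qed.

Lemma dirichlet_edge_bound : exists2 K, 0 <= K & forall g a b, 0 < kappa Pi a b ->
  `|g b - g a| <= K * Num.sqrt (dirichlet th g g).
Proof.
pose Kc := \sum_(a : S) \sum_(b | 0 < kappa Pi a b) (cw Pi q a b * th a b)^-1.
exists (Num.sqrt Kc) => [|g a b k_gt0]; first exact: sqrtr_ge0.
(* [(g b - g a)^2 = (c th)^-1 * (c th (g b - g a)^2) <= Kc * dirichlet th g g] *)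
have w_gt0 := cwth_gt0 k_gt0.
rewrite -sqrtrM ?sumr_ge0 // => [|a' _]; last first.
  by rewrite sumr_ge0 // => b' /cwth_gt0 /ltW; rewrite invr_ge0.
rewrite -sqrtr_sqr ler_wsqrtr // -[_ ^+ 2](mulKf (lt0r_neq0 w_gt0)).
apply: ler_pM.
- by rewrite invr_ge0 ltW.
- by rewrite mulr_ge0 ?sqr_ge0 ?ltW.
- apply: (ler_sum_pair_term (P := fun a b => 0 < kappa Pi a b)) => // a' b' k'_gt0.
  by rewrite invr_ge0 ltW ?cwth_gt0.
- rewrite expr2; apply: (ler_sum_pair_term (P := fun a b => 0 < kappa Pi a b)) => // a' b' k'_gt0.
  by rewrite -expr2 mulr_ge0 ?sqr_ge0 ?ltW ?cwth_gt0.
Qed.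

Lemma path_osc_bound (e : rel S) (g : S -> R) C :
  (forall a b, e a b -> `|g b - g a| <= C) ->
  forall s x, path e x s -> `|g (last x s) - g x| <= (size s)%:R * C.
Proof.
move=> edge; elim=> [|z s IH] x /=; first by rewrite subrr normr0 mul0r.
move=> /andP[/edge exz /IH ezs]; rewrite -(subrK (g z) (g (last z s))) -addrA.
by rewrite (le_trans (ler_normD _ _)) // -addn1 natrD mulrDl mul1r lerD.
Qed.

Lemma dirichlet_osc : exists2 M, 0 <= M & forall g x y,
  `|g y - g x| <= M * Num.sqrt (dirichlet th g g).
Proof.
have [K K_ge0 edge] := dirichlet_edge_bound.
exists (#|S|%:R * K) => [|g x y]; first by rewrite mulr_ge0.
have step a b : 0 < Pi a b -> `|g b - g a| <= K * Num.sqrt (dirichlet th g g).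
  have [->|ab] := eqVneq a b; first by rewrite subrr normr0 mulr_ge0 ?sqrtr_ge0.
  by rewrite -kappa_offdiag //; exact: edge.
have /connectP [s ps ->] := irreducible x y.
have [s' ps' /card_uniqP s'_uniq _] := shortenP ps.
rewrite (le_trans (path_osc_bound step ps')) // -mulrA ler_wpM2r ?mulr_ge0 ?sqrtr_ge0 //.
by rewrite ler_nat ltnW // -[(size s').+1]/(size (x :: s')) -s'_uniq max_card.
Qed.

End Poincare.
End DirichletForm.

Section NegativeSobolevNorm.
Variables (R : realType) (S : finType) (Pi : S -> S -> R) (q : S -> R).
Variables (Phi : R -> R) (l : S -> R).
Hypothesis q_gt0 : forall x, 0 < q x.
Hypothesis th_gt0 : forall x y, 0 < kappa Pi x y -> 0 < vartheta Phi l x y.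
Hypothesis irreducible : forall x y, connect (fun a b => 0 < Pi a b) x y.

Local Notation th := (vartheta Phi l).
Local Notation H1 := (H1norm Pi q Phi l).
Local Notation Hm1 := (Hm1norm Pi q Phi l).

Let q_ge0 x : 0 <= q x. Proof. exact: ltW. Qed.
Let th_ge0 x y : 0 < kappa Pi x y -> 0 <= th x y. Proof. by move/th_gt0/ltW. Qed.
Let H1_ge0 g : 0 <= H1 g. Proof. exact: sqrtr_ge0. Qed.

Lemma H1normN u : H1 (fun z => - u z) = H1 u.
Proof.
by congr Num.sqrt; apply: eq_bigr => x _; apply: eq_bigr => y _; rewrite /grad; ring.
Qed.

Lemma Hm1norm_dual f u : (forall g, qdot q f g = dirichlet Pi q th u g) ->
  Hm1 f = (H1 u)%:E.
Proof.
move=> rep; apply/le_anti/andP; split.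
  apply: ge_ereal_sup => _ [g _ <-].
  by rewrite lee_fin -/(qdot q f g) rep /H1norm !H1sqE dirichlet_ratio_le.
apply: ereal_sup_ubound; exists u => //.
by rewrite -/(qdot q f u) rep /H1norm !H1sqE dirichlet_ratio_self.
Qed.

Lemma Hm1normZ c f : 0 < c -> Hm1 (fun x => c * f x) = (c%:E * Hm1 f)%E.
Proof.
move=> c_gt0; rewrite /Hm1norm -ereal_sup_pZl // image_comp; congr ereal_sup.
apply: eq_imagel => g _ /=; rewrite -EFinM; congr (_%:E).
by rewrite mulrA mulr_sumr; congr (_ / _); apply: eq_bigr => x _; ring.
Qed.

Lemma Hm1norm_perturb M f u E : 0 <= M ->
  (forall g x y, `|g y - g x| <= M * H1 g) ->
  (forall g, qdot q f g = dirichlet Pi q th u g) ->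
  \sum_(x : S) q x * E x = 0 ->
  ((H1 u - M * \sum_(x : S) q x * `|E x|)%R%:E <= Hm1 (fun x => f x + E x)%R
    <= (H1 u + M * \sum_(x : S) q x * `|E x|)%R%:E)%E.
Proof.
move=> M_ge0 osc rep E0; set eps := M * _.
have eps_ge0 : 0 <= eps by rewrite mulr_ge0 ?sumr_ge0 // => x _; rewrite mulr_ge0.
have ratioE g : `|qdot q E g / H1 g| <= eps.
  have bound := qdot_mean0_le q_ge0 (osc g) E0.
  rewrite normrM normfV (ger0_norm (H1_ge0 g)).
  have [->|H1_neq0] := eqVneq (H1 g) 0; first by rewrite invr0 mulr0.
  by rewrite ler_pdivrMr ?lt_def ?H1_neq0 ?H1_ge0 // /eps mulrAC.
have ratio_self : qdot q f u / H1 u = H1 u.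
  by rewrite rep /H1norm H1sqE dirichlet_ratio_self.
have ratio_le g : qdot q f g / H1 g <= H1 u.
  by rewrite rep /H1norm !H1sqE dirichlet_ratio_le.
apply/andP; split.
  apply: le_ereal_sup_tmp; exists ((qdot q (fun x => f x + E x) u / H1 u)%:E).
    by exists u.
  rewrite lee_fin qdotDl mulrDl ratio_self lerD2l lerNl.
  by rewrite (le_trans _ (ratioE u)) // -normrN ler_norm.
apply: ge_ereal_sup => _ [g _ <-].
rewrite lee_fin -/(qdot q _ g) qdotDl mulrDl lerD ?ratio_le //.
exact: le_trans (ler_norm _) (ratioE g).
Qed.

Lemma Hm1norm_cvg {T : Type} (G : set_system T) {FG : Filter G}
    (F : T -> S -> R) f u :
  (forall g, qdot q f g = dirichlet Pi q th u g) ->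
  (\forall t \near G, \sum_(x : S) q x * F t x = 0) ->
  (forall x, F^~ x @ G --> f x) ->
  Hm1 (F t) @[t --> G] --> (H1 u)%:E.
Proof.
move=> rep F0 Ff.
have [M M_ge0 osc] := dirichlet_osc irreducible q_gt0 th_gt0.
have f0 : \sum_(x : S) q x * f x = 0.
  by rewrite -[RHS](dirichlet_cstr Pi q th u 1) -rep; apply: eq_bigr => x _; rewrite mulr1.
pose eps t := M * \sum_(x : S) q x * `|F t x - f x|.
have eps0 : eps t @[t --> G] --> 0.
  rewrite -(mulr0 M); apply: cvgM; first exact: cvg_cst.
  rewrite [X in _ --> X](_ : 0 = \sum_(x : S) q x * `|f x - f x|); last first.
    by rewrite big1 // => x _; rewrite subrr normr0 mulr0.
  apply: cvg_sum => x.
  apply: cvgM; first exact: cvg_cst.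
  exact: cvg_norm (cvgB (Ff x) (cvg_cst (f x))).
apply: (@squeeze_cvge _ _ _ _ (fun t => (H1 u - eps t)%:E) _ (fun t => (H1 u + eps t)%:E)).
- near=> t.
  have -> : F t = fun x => f x + (F t x - f x) by apply: funext => x; rewrite addrC subrK.
  apply: Hm1norm_perturb => //.
  by under eq_bigr do rewrite mulrBr; rewrite sumrB f0 subr0; near: t.
- apply: cvg_EFin; first exact: nearW.
  by rewrite -[X in _ --> X]subr0; exact: cvgB (cvg_cst _) eps0.
- apply: cvg_EFin; first exact: nearW.
  by rewrite -[X in _ --> X]addr0; exact: cvgD (cvg_cst _) eps0.
Unshelve. all: by end_near.
Qed.

Lemma Hm1norm_diff_quotient_cvg (D : R -> S -> R) f u :
  (forall g, qdot q f g = dirichlet Pi q th u g) ->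
  (\forall h \near 0^'+, \sum_(x : S) q x * (h^-1 * D h x) = 0) ->
  (forall x, h^-1 * D h x @[h --> 0^'+] --> f x) ->
  ((h^-1)%:E * Hm1 (D h))%E @[h --> 0^'+] --> (H1 u)%:E.
Proof.
move=> rep D0 Df; apply: cvg_trans (Hm1norm_cvg rep D0 Df); apply: near_eq_cvg.
by near=> h; rewrite Hm1normZ // invr_gt0; near: h; exact: nbhs_right_gt.
Unshelve. all: by end_near.
Qed.

End NegativeSobolevNorm.

Section RightDerivative.
Variable R : realType.

Lemma is_derive_diff_quotient_right (f : R -> R) (a d : R) : is_derive a 1 f d ->
  h^-1 * (f (a + h) - f a) @[h --> 0^'+] --> d.
Proof.
move=> [fd <-]; apply: cvg_dnbhs_at_right; apply: cvg_trans fd; apply: near_eq_cvg.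
by near=> h; rewrite /= [_%:A]mulr1 (addrC h) addrC.
Unshelve. all: by end_near.
Qed.

Lemma near_mul_cvg_eq0 (d c : R) (g : R -> R) :
  (\forall h \near 0^'+, d = h * g h) -> g @ 0^'+ --> c -> d = 0.
Proof.
move=> dE gc.
have to_d : h * g h @[h --> 0^'+] --> d.
  exact: cvg_trans (near_eq_cvg dE) (cvg_cst d).
have to_0 : h * g h @[h --> 0^'+] --> 0.
  have id0 : h @[h --> 0^'+] --> (0 : R) by apply: cvg_at_right_filter; exact: cvg_id.
  by rewrite -[X in _ --> X](mul0r c); exact: cvgM id0 gc.
exact: cvg_unique to_d to_0.
Qed.

Lemma is_derive_sum_seq (I : Type) (s : seq I) (f : I -> R -> R) (df : I -> R) (t : R) :
  (forall i, is_derive t 1 (f i) (df i)) ->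
  is_derive t 1 (fun u => \sum_(i <- s) f i u) (\sum_(i <- s) df i).
Proof.
move=> fd; elim: s => [|i s IH].
  rewrite big_nil; under eq_fun do rewrite big_nil; exact: is_derive_cst.
rewrite big_cons; under eq_fun do rewrite big_cons; exact: is_deriveD.
Qed.

End RightDerivative.

Section MassConservation.
Variables (R : realType) (S : finType) (w : S -> R) (f V : R -> S -> R) (L : S -> R).
Variables (t0 eps : R).
Hypothesis f_deriv :
  forall t y, t0 < t < t0 + eps -> is_derive t 1 (fun s => f s y) (V t y).
Hypothesis V_mass0 : forall t, t0 < t < t0 + eps -> \sum_(y : S) w y * V t y = 0.
Hypothesis f_right_deriv :
  forall y, h^-1 * (f (t0 + h) y - f t0 y) @[h --> 0^'+] --> L y.

Let mass t := \sum_(y : S) w y * f t y.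

Let mass_deriv t : t0 < t < t0 + eps -> is_derive t 1 mass 0.
Proof.
move=> tI; rewrite -(V_mass0 tI); apply: is_derive_sum_seq => y.
exact: is_deriveZ (f_deriv y tI).
Qed.

Let mass_const a b : t0 < a -> a < b -> b < t0 + eps -> mass b = mass a.
Proof.
move=> t0a ab bt; have aI t : a <= t -> t <= b -> t0 < t < t0 + eps.
  by move=> a_le le_b; rewrite (lt_le_trans t0a a_le) (le_lt_trans le_b bt).
have mass_d t : t \in `]a, b[ -> is_derive t 1 mass 0.
  by rewrite in_itv => /andP[/ltW a_le /ltW le_b]; exact: mass_deriv (aI t a_le le_b).
have mass_c : {within `[a, b], continuous mass}.
  apply: derivable_within_continuous => t; rewrite in_itv => /andP[a_le le_b].
  by have [] := mass_deriv (aI t a_le le_b).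
by have [c _ /eqP] := MVT ab mass_d mass_c; rewrite mul0r subr_eq0 => /eqP.
Qed.

Lemma mass_conserved h : 0 < h < eps ->
  \sum_(y : S) w y * f (t0 + h) y = \sum_(y : S) w y * f t0 y.
Proof.
move=> /andP[h_gt0 h_lt]; apply/eqP; rewrite -subr_eq0; apply/eqP.
apply: (@near_mul_cvg_eq0 _ _ (\sum_(y : S) w y * L y)
          (fun h' => \sum_(y : S) w y * (h'^-1 * (f (t0 + h') y - f t0 y)))).
  near=> h'.
  have h'_gt0 : 0 < h' by near: h'; exact: nbhs_right_gt.
  have h'_lt : h' < h by near: h'; exact: nbhs_right_lt.
  rewrite -/(mass (t0 + h)) (@mass_const (t0 + h')) ?ltrDl ?ltrD2l //.
  rewrite mulr_sumr /mass -sumrB; apply: eq_bigr => y _.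
  by rewrite mulrCA mulVKf ?gt_eqF // mulrBr.
by apply: cvg_sum => y; apply: cvgM; [exact: cvg_cst | exact: f_right_deriv].
Unshelve. all: by end_near.
Qed.

Lemma mass_diff_quotient0 : 0 < eps ->
  \forall h \near 0^'+, \sum_(y : S) w y * (h^-1 * (f (t0 + h) y - f t0 y)) = 0.
Proof.
move=> eps_gt0; near=> h.
have hI : 0 < h < eps.
  by apply/andP; split; near: h; [exact: nbhs_right_gt | exact: nbhs_right_lt].
under eq_bigr do rewrite mulrCA mulrBr.
by rewrite -mulr_sumr sumrB mass_conserved // subrr mulr0.
Unshelve. all: by end_near.
Qed.

End MassConservation.

Lemma invariant_gt0 (R : realType) (S : finType) (Pi : S -> S -> R) (q : S -> R) :
  (forall x y, 0 <= Pi x y) -> (forall x y, connect (fun a b => 0 < Pi a b) x y) ->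
  (forall y, 0 <= q y) -> \sum_(y : S) q y = 1 ->
  (forall y, \sum_(x : S) q x * Pi x y = q y) -> forall y, 0 < q y.
Proof.
move=> Pi_ge0 irreducible q_ge0 q_sum1 q_inv.
have q0_step x z : q z = 0 -> 0 < Pi x z -> q x = 0.
  move=> qz0 Pxz; move: qz0; rewrite -q_inv => /psumr_eq0P.
  move=> /(_ (fun x _ => mulr_ge0 (q_ge0 x) (Pi_ge0 x z)) x erefl) /eqP.
  by rewrite mulf_eq0 (gt_eqF Pxz) orbF => /eqP.
have q0_path s x : path (fun a b => 0 < Pi a b) x s -> q (last x s) = 0 -> q x = 0.
  by elim: s x => [|z s IH] x //= /andP[Pxz /IH qz0 /qz0 /q0_step]; exact.
move=> y; rewrite lt_def q_ge0 andbT; apply/eqP => qy0.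
have q0 x : q x = 0.
  by have /connectP [s ps ys] := irreducible x y; apply: q0_path ps _; rewrite -ys.
by move: q_sum1; rewrite big1 // => /esym/eqP; rewrite oner_eq0.
Qed.

Lemma near_right_interval (R : realType) (T : R) (P : R -> Prop) :
  (\forall s \near T^'+, P s) -> exists2 d, 0 < d & forall s, T < s <= T + d -> P s.
Proof.
rewrite near_withinE => /nbhs_ballP [e /= e_gt0 PT].
exists (e / 2) => [|s /andP[Ts sTd]]; first by rewrite divr_gt0.
by apply: PT => //; rewrite /ball /= ltr_norml; apply/andP; split; lra.
Qed.

Section ForwardPositivity.
Variables (R : realType) (S : finType) (Pi : S -> S -> R) (p : R -> S -> R).
Hypothesis Pi_ge0 : forall x y, 0 <= Pi x y.
Hypothesis p0_gt0 : forall y, 0 < p 0 y.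
Hypothesis p_cvg0 : forall y, (fun s => p s y) @ 0^'+ --> p 0 y.
Hypothesis p_deriv : forall (t : R) (y : S), 0 < t ->
  is_derive t 1 (fun s => p s y) (\sum_(x : S) p t x * kappa Pi x y).

Let p_derivable t y : 0 < t -> derivable (fun s => p s y) t 1.
Proof. by move=> t_gt0; have [] := p_deriv y t_gt0. Qed.

(* [expR t * p t y] has derivative [expR t * \sum_x p t x * Pi x y >= 0] while [p t >= 0] *)
Lemma expR_forward_le a b y : 0 < a -> a < b ->
  (forall s x, a < s < b -> 0 <= p s x) -> expR a * p a y <= expR b * p b y.
Proof.
move=> a_gt0 ab p_ge0; rewrite -subr_ge0.
pose u s := expR s * p s y.
pose du s := expR s * (\sum_(x : S) p s x * kappa Pi x y) + p s y * expR s.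
have u_d s : s \in `]a, b[ -> is_derive s 1 u (du s).
  rewrite in_itv => /andP[a_lt _]; exact: is_deriveM (p_deriv y (lt_trans a_gt0 a_lt)).
have u_c : {within `[a, b], continuous u}.
  apply: derivable_within_continuous => s; rewrite in_itv => /andP[a_lt _].
  by apply: derivableM; [exact: derivable_expR | exact: p_derivable (lt_le_trans a_gt0 a_lt)].
have [c] := MVT ab u_d u_c; rewrite in_itv /= => /andP[ac cb] ->.
rewrite mulr_ge0 ?subr_ge0 ?(ltW ab) //.
have -> : du c = expR c * \sum_(x : S) p c x * Pi x y.
  rewrite /du /kappa (bigD1 y) //= [in RHS](bigD1 y) //= eqxx mulr1n.
  under eq_bigr => x /negbTE -> do rewrite subr0.
  by ring.
rewrite mulr_ge0 ?(ltW (expR_gt0 c)) // sumr_ge0 // => x _.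
by rewrite mulr_ge0 // p_ge0 // ac cb.
Qed.

Lemma forward_gt0_at T : 0 < T ->
  (forall s y, 0 <= s < T -> 0 < p s y) -> forall y, 0 < p T y.
Proof.
move=> T_gt0 p_gt0 y.
have T2_gt0 : 0 < T / 2 by rewrite divr_gt0.
have T2_lt : T / 2 < T by rewrite ltr_pdivrMr // ltr_pMr // ltr1n.
have p_ge0 s x : T / 2 < s < T -> 0 <= p s x.
  by move=> /andP[T2s sT]; rewrite ltW // p_gt0 // sT (le_trans (ltW T2_gt0) (ltW T2s)).
have := expR_forward_le y T2_gt0 T2_lt p_ge0.
rewrite -(pmulr_rgt0 _ (expR_gt0 T)); apply: lt_le_trans.
by rewrite mulr_gt0 ?expR_gt0 // p_gt0 // (ltW T2_gt0) T2_lt.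
Qed.

Lemma forward_law_gt0 t0 : 0 < t0 -> forall y, 0 < p t0 y.
Proof.
move=> t0_gt0.
pose A := [set t | 0 <= t <= t0 /\ forall s y, 0 <= s <= t -> 0 < p s y].
have A0 : A 0 by split=> [|s y]; [rewrite lexx ltW | rewrite -eq_le => /eqP <-].
have A_sup : has_sup A by split; [exists 0 | exists t0 => t [/andP[_ ->]]].
set T := sup A.
have T_ge0 : 0 <= T := sup_upper_bound A_sup A0.
have T_le : T <= t0 by apply: ge_sup; [exists 0 | move=> t [/andP[_ ->]]].
have below s y : 0 <= s < T -> 0 < p s y.
  move=> /andP[s_ge0 sT].
  have Ts_gt0 : 0 < T - s by rewrite subr_gt0.
  have [a [_ Ha] sa] := sup_adherent Ts_gt0 A_sup.
  by apply: Ha; rewrite s_ge0 ltW //; rewrite opprB addrCA subrr addr0 in sa.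
have atT y : 0 < p T y.
  have [->|T_neq0] := eqVneq T 0; first exact: p0_gt0.
  by apply: (forward_gt0_at _ below); rewrite lt_def T_neq0.
suff <- : T = t0 by [].
apply/eqP; rewrite eq_le T_le /= leNgt; apply/negP => T_lt.
have right_gt0 : \forall s \near T^'+, forall y, 0 < p s y.
  apply: filter_forall => y; apply: cvgr_gt (atT y).
  have [T0|T_neq0] := eqVneq T 0; first by rewrite T0; exact: p_cvg0.
  apply: cvg_at_right_filter; apply: differentiable_continuous; apply/derivable1_diffP.
  by apply: p_derivable; rewrite lt_def T_neq0.
have [d d_gt0 Td_gt0] := near_right_interval right_gt0.
have : A (Num.min (T + d) t0).
  split=> [|s y /andP[s_ge0 s_le]].
    by rewrite le_min ge_min lexx orbT andbT addr_ge0 ?(ltW d_gt0) ?(ltW t0_gt0).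
  have [sT|Ts|->] := ltgtP s T; last exact: atT.
  - by apply: below; rewrite s_ge0 sT.
  - by apply: Td_gt0; rewrite Ts (le_trans s_le) // ge_min lexx.
move=> /(sup_upper_bound A_sup); rewrite -/T ge_min leNgt ltrDl d_gt0 /=.
by rewrite leNgt T_lt.
Qed.

End ForwardPositivity.

Section DensityEvolution.
Variables (R : realType) (S : finType) (Pi : S -> S -> R) (q : S -> R) (p : R -> S -> R).
Hypothesis Pi_sum1 : forall x, \sum_(y : S) Pi x y = 1.
Hypothesis q_gt0 : forall x, 0 < q x.
Hypothesis q_kappa_sym : forall x y, q x * kappa Pi x y = q y * kappa Pi y x.
Hypothesis p_deriv : forall (t : R) (y : S), 0 < t ->
  is_derive t 1 (fun s => p s y) (\sum_(x : S) p t x * kappa Pi x y).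

Lemma density_deriv (t : R) y : 0 < t ->
  is_derive t 1 (fun s => p s y / q y) (Kop Pi (fun z => p t z / q z) y).
Proof.
move=> t_gt0.
have -> : Kop Pi (fun z => p t z / q z) y = (q y)^-1 *: \sum_(x : S) p t x * kappa Pi x y.
  rewrite /Kop [RHS]mulr_sumr; apply: eq_bigr => x _.
  have kE : kappa Pi y x = q x * kappa Pi x y / q y.
    by rewrite -q_kappa_sym mulrAC mulfV ?mul1r ?gt_eqF.
  by rewrite kE; field; rewrite !gt_eqF.
under eq_fun do rewrite mulrC; exact: is_deriveZ (p_deriv y t_gt0).
Qed.

Lemma density_diff_quotient_cvg t0 : 0 < t0 -> forall y,
  h^-1 * (p (t0 + h) y / q y - p t0 y / q y) @[h --> 0^'+]
    --> Kop Pi (fun z => p t0 z / q z) y.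
Proof. by move=> t0_gt0 y; exact: is_derive_diff_quotient_right (density_deriv y t0_gt0). Qed.

Lemma density_diff_quotient_mass0 t0 : 0 < t0 ->
  \forall h \near 0^'+, \sum_(x : S) q x * (h^-1 * (p (t0 + h) x / q x - p t0 x / q x)) = 0.
Proof.
move=> t0_gt0.
apply: (mass_diff_quotient0 (w := q) (f := fun t z => p t z / q z)
  (V := fun t => Kop Pi (fun z => p t z / q z)) (eps := 1)).
- by move=> t y /andP[t0t _]; apply: density_deriv; exact: lt_trans t0_gt0 t0t.
- by move=> t _; exact: Kop_mass0.
- exact: density_diff_quotient_cvg.
- exact: ltr01.
Qed.

End DensityEvolution.

Theorem proposition8p5 (R : realType) (S : finType)
  (Pi : S -> S -> R) (q : S -> R) (Phi : R -> R)
  (p : R -> S -> R) (t0 eps : R) (psi lpsi : R -> S -> R) :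
  (* Pi irreducible stochastic *)
  (forall x y, 0 <= Pi x y) ->
  (forall x, \sum_(y : S) Pi x y = 1) ->
  (forall x y, connect (fun a b => 0 < Pi a b) x y) ->
  (* q invariant distribution *)
  (forall y, 0 <= q y) -> \sum_(y : S) q y = 1 ->
  (forall y, \sum_(x : S) q x * Pi x y = q y) ->
  (* detailed balance *)
  (forall y z, q y * kappa Pi y z = q z * kappa Pi z y) ->
  (* Phi on (0,oo): convex, C^1, with continuous positive second derivative *)
  (forall x y (s : R), 0 < x -> 0 < y -> 0 <= s <= 1 ->
     Phi (s * x + (1 - s) * y) <= s * Phi x + (1 - s) * Phi y) ->
  (forall x, 0 < x -> derivable Phi x 1) ->
  (forall x, 0 < x -> derivable (phiP Phi) x 1) ->
  (forall x, 0 < x -> {for x, continuous (Phi2 Phi)}) ->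
  (forall x, 0 < x -> 0 < Phi2 Phi x) ->
  Phi 1 = 0 ->
  (* p(t,.) = law at time t of the chain with generator K, positive initial law *)
  (forall y, 0 < p 0 y) -> \sum_(y : S) p 0 y = 1 ->
  (forall y, (fun s => p s y) @ 0^'+ --> p 0 y) ->
  (forall (t : R) (y : S), 0 < t ->
     is_derive t 1 (fun s => p s y) (\sum_(x : S) p t x * kappa Pi x y)) ->
  (* the curve (lpsi_t) driven by psi_t on [t0, t0+eps) *)
  0 < t0 -> 0 < eps ->
  (forall y, {within `[t0, t0 + eps[, continuous (fun t => psi t y)}) ->
  (forall (t : R) (y : S), t0 <= t < t0 + eps -> 0 < lpsi t y) ->
  (forall y, lpsi t0 y = p t0 y / q y) ->
  (forall y, (fun h => h^-1 * (lpsi (t0 + h) y - lpsi t0 y)) @ 0^'+ -->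
     - divg Pi (fun a b => vartheta Phi (fun z => p t0 z / q z) a b
                            * grad (psi t0) a b) y) ->
  (forall (t : R) (y : S), t0 < t < t0 + eps ->
     is_derive t 1 (fun s => lpsi s y)
       (- divg Pi (fun a b => vartheta Phi (fun z => p t z / q z) a b
                               * grad (psi t) a b) y)) ->
  let ell := fun t z => p t z / q z in
  let l := ell t0 in
  ((fun h : R => ((h^-1)%:E * Hm1norm Pi q Phi l (fun z => (ell (t0 + h) z - ell t0 z)%R))%E)
     @ 0^'+ --> Hm1norm Pi q Phi l (Kop Pi (ell t0)))
  /\ Hm1norm Pi q Phi l (Kop Pi (ell t0))
     = (H1norm Pi q Phi l (fun z => phiP Phi (ell t0 z)))%:E
  /\ ((fun h : R => ((h^-1)%:E * Hm1norm Pi q Phi l (fun z => (lpsi (t0 + h) z - lpsi t0 z)%R))%E)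
     @ 0^'+ --> Hm1norm Pi q Phi l
                  (divg Pi (fun a b => vartheta Phi (ell t0) a b * grad (psi t0) a b)))
  /\ Hm1norm Pi q Phi l
       (divg Pi (fun a b => vartheta Phi (ell t0) a b * grad (psi t0) a b))
     = (H1norm Pi q Phi l (psi t0))%:E.
Proof.
(* Convexity and derivability of [Phi], [Phi 1 = 0], continuity of [Phi''], the
   normalisation of [p 0], the regularity of [psi] and the initial value and
   positivity of [lpsi] are not needed: the right derivative of [lpsi] at [t0]
   is assumed outright. *)
move=> Pi_ge0 Pi_sum1 irreducible q_ge0 q_sum1 q_inv q_kappa_sym _ _ phiP_d _ Phi2_gt0 _
  p0_gt0 _ p_cvg0 p_deriv t0_gt0 eps_gt0 _ _ _ lpsi_rd lpsi_d ell l.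
have q_gt0 := invariant_gt0 Pi_ge0 irreducible q_ge0 q_sum1 q_inv.
have l_gt0 y : 0 < l y.
  exact: divr_gt0 (forward_law_gt0 Pi_ge0 p0_gt0 p_cvg0 p_deriv t0_gt0 y) (q_gt0 y).
have th_gt0 x y : 0 < kappa Pi x y -> 0 < vartheta Phi l x y.
  by move=> _; exact: ThetaP_gt0.
have th_sym t a b : vartheta Phi (ell t) a b = vartheta Phi (ell t) b a by exact: ThetaPC.
have repK := qdot_Kop Pi_ge0 q_kappa_sym _ Pi_sum1 phiP_d Phi2_gt0 l_gt0.
have repD := qdot_divg Pi_ge0 q_kappa_sym (psi t0) _ (th_sym t0).
have repND := qdot_Ndivg Pi_ge0 q_kappa_sym (psi t0) _ (th_sym t0).
have HK := Hm1norm_dual q_gt0 th_gt0 repK; rewrite H1normN in HK.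
have HD := Hm1norm_dual q_gt0 th_gt0 repD; rewrite H1normN in HD.
split; [|split; [exact: HK|split; [|exact: HD]]].
- rewrite HK -H1normN; apply: (Hm1norm_diff_quotient_cvg q_gt0 th_gt0 irreducible
    (D := fun h z => ell (t0 + h) z - ell t0 z) repK).
  + exact (density_diff_quotient_mass0 Pi_sum1 q_gt0 q_kappa_sym p_deriv t0_gt0).
  + exact (density_diff_quotient_cvg q_gt0 q_kappa_sym p_deriv t0_gt0).
- rewrite HD; apply: (Hm1norm_diff_quotient_cvg q_gt0 th_gt0 irreducible
    (D := fun h z => lpsi (t0 + h) z - lpsi t0 z) repND); last exact: lpsi_rd.
  apply: (mass_diff_quotient0 lpsi_d _ lpsi_rd eps_gt0) => t _.
  exact (Ndivg_mass0 Pi_ge0 q_kappa_sym _ (th_sym t)).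
Qed.
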